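(* Let $(X,d)$ be a metric space, $F$ a semiflow on $X$, $\varepsilon>0$, $x\in X$, and let $\gamma:[0,T]\to X$ be an $\varepsilon$-chain from $x$ to $x$. Then there exists $\tau_*>0$ such that for every $T'\in(T-\tau_*,T)$ with $T'\ge1$ there is a $4\varepsilon$-chain $\gamma':[0,T']\to X$ from $x$ to $x$.
   Context: A semiflow on a metric space $(X,d)$ is a continuous map $F:[0,\infty)\times X\to X$, $(t,x)\mapsto F^t(x)$, with $F^0=\mathrm{id}$ and $F^{t+s}=F^t\circ F^s$ for all $t,s\ge0$. A curve is piecewise continuous if it is continuous except at finitely many points, at which one-sided limits exist. For $T\ge1$, a piecewise continuous curve $\gamma:[0,T]\to X$ is $\varepsilon$-close to $F$ if $d(\gamma(t+\tau),F^\tau(\gamma(t)))<\varepsilon$ for every $\tau\in[0,1]$ and $t\in[0,T-\tau]$. An $\varepsilon$-chain from $x$ to $y$ is a piecewise continuous $\gamma:[0,T]\to X$, $T\ge 1$, with $\gamma(0)=x$, $\gamma(T)=y$, and $\gamma$ $\varepsilon$-close to $F$. *)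

From Stdlib Require Import Reals Lra List.
Open Scope R_scope.

Record MetricSpace := {
  carrier :> Type;
  dist : carrier -> carrier -> R;
  dist_refl : forall x, dist x x = 0;
  dist_eq0 : forall x y, dist x y = 0 -> x = y;
  dist_sym : forall x y, dist x y = dist y x;
  dist_tri : forall x y z, dist x z <= dist x y + dist y z
}.

Arguments dist {m} _ _.

(* F : [0,oo) x X -> X continuous (product topology), F^0 = id,
   F^(t+s) = F^t o F^s for t,s >= 0.  Values of F at t < 0 are irrelevant. *)
Definition semiflow (X : MetricSpace) (F : R -> X -> X) : Prop :=
  (forall t x, 0 <= t -> forall e, 0 < e -> exists de, 0 < de /\
     forall s y, 0 <= s -> Rabs (s - t) < de -> dist y x < de ->
       dist (F s y) (F t x) < e) /\
  (forall x, F 0 x = x) /\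
  (forall t s x, 0 <= t -> 0 <= s -> F (t + s) x = F t (F s x)).

Definition cont_on_at (X : MetricSpace) (g : R -> X) (T p : R) : Prop :=
  forall e, 0 < e -> exists de, 0 < de /\
    forall s, 0 <= s <= T -> Rabs (s - p) < de -> dist (g s) (g p) < e.

Definition left_limit_exists (X : MetricSpace) (g : R -> X) (T p : R) : Prop :=
  exists L : X, forall e, 0 < e -> exists de, 0 < de /\
    forall s, 0 <= s <= T -> p - de < s < p -> dist (g s) L < e.

Definition right_limit_exists (X : MetricSpace) (g : R -> X) (T p : R) : Prop :=
  exists L : X, forall e, 0 < e -> exists de, 0 < de /\
    forall s, 0 <= s <= T -> p < s < p + de -> dist (g s) L < e.

(* gamma : [0,T] -> X (represented by a total function R -> X whose values
   outside [0,T] are ignored) is piecewise continuous: continuous except at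
   finitely many points, at which the one-sided limits (those that make sense
   inside [0,T]) exist. *)
Definition piecewise_continuous (X : MetricSpace) (g : R -> X) (T : R) : Prop :=
  exists l : list R,
    (forall p, 0 <= p <= T -> ~ In p l -> cont_on_at X g T p) /\
    (forall p, In p l -> 0 <= p <= T ->
       (0 < p -> left_limit_exists X g T p) /\
       (p < T -> right_limit_exists X g T p)).

Definition eps_close (X : MetricSpace) (F : R -> X -> X) (eps T : R)
  (g : R -> X) : Prop :=
  forall tau t, 0 <= tau <= 1 -> 0 <= t <= T - tau ->
    dist (g (t + tau)) (F tau (g t)) < eps.

Definition eps_chain (X : MetricSpace) (F : R -> X -> X) (eps : R) (x y : X)
  (T : R) (g : R -> X) : Prop :=
  1 <= T /\ g 0 = x /\ g T = y /\ piecewise_continuous X g T /\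
  eps_close X F eps T g.

From Pilot Require Import Defs.
From Stdlib Require Import Reals Lra List.
Open Scope R_scope.

(* Cut the loop gamma at a time T' slightly before T and jump back to x.
   Since gamma(T) = x is within eps of F^(T-T') gamma(T'), and gamma(T') and
   F^(T-T') gamma(T') are both close to the left limit L of gamma at T (by
   continuity of F at time 0), gamma(T') is within 3 eps of x; the jump then
   costs at most 3 eps in the closeness estimate. *)

Lemma dist_ge0 (X : MetricSpace) (a b : X) : 0 <= Defs.dist a b.
Proof.
  pose proof (Defs.dist_tri X a b a). pose proof (Defs.dist_sym X b a).
  rewrite Defs.dist_refl in *. lra.
Qed.

Definition truncate (X : MetricSpace) (g : R -> X) (T' : R) (y : X) : R -> X :=
  fun t => if Rlt_dec t T' then g t else y.

Lemma cont_on_at_left_limit (X : MetricSpace) (g : R -> X) (T p : R) :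
  cont_on_at X g T p -> left_limit_exists X g T p.
Proof.
  intros Hc. exists (g p). intros e he.
  destruct (Hc e he) as [de [hde Hde]].
  exists de; split; [exact hde|]. intros s hs hsp.
  apply Hde; [exact hs|]. rewrite Rabs_left; lra.
Qed.

Lemma cont_on_at_right_limit (X : MetricSpace) (g : R -> X) (T p : R) :
  cont_on_at X g T p -> right_limit_exists X g T p.
Proof.
  intros Hc. exists (g p). intros e he.
  destruct (Hc e he) as [de [hde Hde]].
  exists de; split; [exact hde|]. intros s hs hsp.
  apply Hde; [exact hs|]. rewrite Rabs_right; lra.
Qed.

Lemma piecewise_continuous_left_limit (X : MetricSpace) (g : R -> X) (T p : R) :
  piecewise_continuous X g T -> 0 < p <= T -> left_limit_exists X g T p.
Proof.
  intros [l [Hc Hl]] hp. destruct (in_dec Req_EM_T p l) as [i|n].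
  - apply (Hl p i); lra.
  - apply cont_on_at_left_limit, Hc; [lra | exact n].
Qed.

Lemma piecewise_continuous_right_limit (X : MetricSpace) (g : R -> X) (T p : R) :
  piecewise_continuous X g T -> 0 <= p < T -> right_limit_exists X g T p.
Proof.
  intros [l [Hc Hl]] hp. destruct (in_dec Req_EM_T p l) as [i|n].
  - apply (Hl p i); lra.
  - apply cont_on_at_right_limit, Hc; [lra | exact n].
Qed.

Lemma piecewise_continuous_truncate (X : MetricSpace) (g : R -> X) (T T' : R) (y : X) :
  piecewise_continuous X g T -> T' <= T ->
  piecewise_continuous X (truncate X g T' y) T'.
Proof.
  intros Hpw hT'. pose proof Hpw as [l [Hc _]].
  unfold truncate. exists (T' :: l). split.
  - intros p hp hnin.
    assert (hpT' : p < T').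
    { destruct (Req_EM_T p T'); [exfalso; apply hnin; left; auto | lra]. }
    assert (hnl : ~ In p l) by (intro; apply hnin; right; assumption).
    intros e he. destruct (Hc p ltac:(lra) hnl e he) as [de [hde Hde]].
    exists (Rmin de (T' - p)). split; [apply Rmin_pos; lra|].
    intros s hs hsp.
    pose proof (Rmin_l de (T' - p)). pose proof (Rmin_r de (T' - p)).
    pose proof (Rabs_def2 _ _ hsp).
    destruct (Rlt_dec s T'), (Rlt_dec p T'); try lra. apply Hde; lra.
  - intros p _ hp. split.
    + intros hp0.
      destruct (piecewise_continuous_left_limit X g T p Hpw ltac:(lra)) as [L HL].
      exists L. intros e he. destruct (HL e he) as [de [hde Hde]].
      exists de; split; [exact hde|]. intros s hs hsp.
      destruct (Rlt_dec s T'); [apply Hde; lra | lra].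
    + intros hpT'.
      destruct (piecewise_continuous_right_limit X g T p Hpw ltac:(lra)) as [L HL].
      exists L. intros e he. destruct (HL e he) as [de [hde Hde]].
      exists (Rmin de (T' - p)). split; [apply Rmin_pos; lra|].
      intros s hs hsp.
      pose proof (Rmin_l de (T' - p)). pose proof (Rmin_r de (T' - p)).
      destruct (Rlt_dec s T'); [apply Hde; lra | lra].
Qed.

Lemma eps_close_truncate (X : MetricSpace) (F : R -> X -> X) (e de T T' : R)
  (g : R -> X) (y : X) :
  (forall z, F 0 z = z) -> eps_close X F e T g -> T' <= T ->
  Defs.dist y (g T') < de -> eps_close X F (e + de) T' (truncate X g T' y).
Proof.
  intros HF0 Hclose hT' hy tau t htau ht. unfold truncate.
  destruct (Rlt_dec (t + tau) T'), (Rlt_dec t T'); try lra.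
  - pose proof (Hclose tau t htau ltac:(lra)).
    pose proof (dist_ge0 X y (g T')). lra.
  - assert (hjump : t + tau = T') by lra.
    pose proof (Hclose tau t htau ltac:(lra)) as hstep. rewrite hjump in hstep.
    pose proof (Defs.dist_tri X y (g T') (F tau (g t))). lra.
  - assert (tau = 0) by lra. subst tau.
    pose proof (Hclose 0 t htau ltac:(lra)).
    pose proof (dist_ge0 X (g (t + 0)) (F 0 (g t))).
    pose proof (dist_ge0 X y (g T')).
    rewrite HF0, Defs.dist_refl. lra.
Qed.

Lemma eps_close_end_near (X : MetricSpace) (F : R -> X -> X) (e T : R) (g : R -> X) :
  semiflow X F -> 0 < e -> 1 <= T -> left_limit_exists X g T T ->
  eps_close X F e T g ->
  exists taus, 0 < taus /\
    forall T', T - taus < T' < T -> Defs.dist (g T) (g T') < 3 * e.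
Proof.
  intros [Hcont [HF0 _]] he hT [L HL] Hclose.
  destruct (Hcont 0 L (Rle_refl 0) e he) as [dF [hdF HdF]].
  destruct (HL (Rmin e dF)) as [dL [hdL HdL]]; [apply Rmin_pos; lra|].
  pose proof (Rmin_l 1 (Rmin dL dF)). pose proof (Rmin_r 1 (Rmin dL dF)).
  pose proof (Rmin_l dL dF). pose proof (Rmin_r dL dF).
  pose proof (Rmin_l e dF). pose proof (Rmin_r e dF).
  exists (Rmin 1 (Rmin dL dF)). split; [repeat apply Rmin_pos; lra|].
  intros T' hT'. set (d := T - T').
  assert (hflow : Defs.dist (g T) (F d (g T')) < e).
  { replace T with (T' + d) at 1 by (unfold d; ring). apply Hclose; unfold d; lra. }
  assert (hlim : Defs.dist (g T') L < Rmin e dF) by (apply HdL; lra).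
  assert (hcont : Defs.dist (F d (g T')) L < e).
  { rewrite <- (HF0 L). apply HdF; unfold d; try lra.
    rewrite Rminus_0_r, Rabs_right; lra. }
  pose proof (Defs.dist_tri X (g T) (F d (g T')) (g T')).
  pose proof (Defs.dist_tri X (F d (g T')) L (g T')).
  pose proof (Defs.dist_sym X L (g T')).
  lra.
Qed.

Theorem lemma3p4 (X : MetricSpace) (F : R -> X -> X) (eps : R) (x : X)
  (T : R) (gamma : R -> X) :
  semiflow X F -> 0 < eps -> eps_chain X F eps x x T gamma ->
  exists taus : R, 0 < taus /\
    forall T' : R, T - taus < T' < T -> 1 <= T' ->
      exists gamma' : R -> X, eps_chain X F (4 * eps) x x T' gamma'.
Proof.
  intros HF heps [hT [h0 [hTT [Hpw Hclose]]]].
  pose proof (piecewise_continuous_left_limit X gamma T T Hpw ltac:(lra)) as HL.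
  destruct (eps_close_end_near X F eps T gamma HF heps hT HL Hclose)
    as [taus [htaus Hnear]].
  exists taus. split; [exact htaus|]. intros T' hT' hT'1.
  exists (truncate X gamma T' x). unfold eps_chain, truncate.
  split; [exact hT'1|]. split.
  { destruct (Rlt_dec 0 T'); [exact h0 | lra]. }
  split.
  { destruct (Rlt_dec T' T'); [lra | reflexivity]. }
  split; [apply piecewise_continuous_truncate with T; [exact Hpw | lra]|].
  replace (4 * eps) with (eps + 3 * eps) by ring.
  destruct HF as [_ [HF0 _]].
  apply eps_close_truncate with T; [exact HF0 | exact Hclose | lra |].
  rewrite <- hTT. apply Hnear. exact hT'.
Qed.
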